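(* Let $\mathcal{A}$ be a subring of the algebraic integers which is closed under complex conjugation. Let $\{\mathcal{W}_i\}_{i=1}^n$ be an equiisoclinic tight fusion frame consisting of $n$ subspaces of dimension $m$ of $\mathbb{F}^k$ ($\mathbb{F}=\mathbb{R}$ or $\mathbb{C}$). For each $i\in[n]$ fix an orthonormal basis of $\mathcal{W}_i$ and let $L_i$ be the $k\times m$ matrix with these basis vectors as columns. If for all $i\in[n]$ the entries of $\sqrt{k}L_i$ lie in $\mathcal{A}$, then \[ \frac{k(mn-k)}{n-1}\in\mathbb{Z}. \]
   Context: The algebraic integers are the complex roots of monic polynomials with integer coefficients. A collection of $m$-dimensional subspaces $\{\mathcal{W}_i\}_{i=1}^n$ of $\mathbb{F}^k$ with orthogonal projections $P_i=L_iL_i^*$ is a tight fusion frame if $\sum_iP_i=AI_k$ for some $A>0$. It is equiisoclinic if there is $\alpha>0$ with $L_i^*L_jL_j^*L_i=\alpha I_m$ for all $i\ne j$ (this does not depend on the choice of orthonormal bases). *)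

From HB Require Import structures.
From mathcomp Require Import all_boot all_order all_algebra all_field.
Set Implicit Arguments. Unset Strict Implicit. Unset Printing Implicit Defensive.
Import Order.TTheory GRing.Theory Num.Theory.
Local Open Scope ring_scope.

Definition adjmx (p q : nat) (L : 'M[algC]_(p, q)) : 'M[algC]_(q, p) :=
  (map_mx Num.conj L)^T.

Definition orthonormal_cols (k m : nat) (L : 'M[algC]_(k, m)) : Prop :=
  adjmx L *m L = 1%:M.

Definition tight_fusion_frame (n k m : nat) (L : 'I_n -> 'M[algC]_(k, m)) : Prop :=
  exists2 A : algC, 0 < A & \sum_(i < n) (L i *m adjmx (L i)) = A%:M.

Definition equiisoclinic (n k m : nat) (L : 'I_n -> 'M[algC]_(k, m)) : Prop :=
  exists2 alpha : algC, 0 < alpha &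
    forall i j : 'I_n, i != j ->
      adjmx (L i) *m L j *m adjmx (L j) *m L i = alpha%:M.

(* Taking traces in [sum_i L_i L_i^* = A I_k] gives [A k = n m], and
   sandwiching it between [L_i^*] and [L_i] gives [A = 1 + alpha (n - 1)].
   Hence [k (m n - k) / (n - 1) = k^2 alpha], a rational number.  But
   [k^2 alpha] is an entry of the product of the four matrices
   [(sqrt k L_i)^*], [sqrt k L_j], [(sqrt k L_j)^*], [sqrt k L_i] for
   [i <> j], all with entries in the conjugation-closed ring [Asub], so it is
   an algebraic integer, and a rational algebraic integer lies in [Z]. *)
From HB Require Import structures.
From mathcomp Require Import all_boot all_order all_algebra all_field.
From mathcomp Require Import algnum ring.
Set Implicit Arguments.
Unset Strict Implicit.
Unset Printing Implicit Defensive.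
Import Order.TTheory GRing.Theory Num.Theory.
Local Open Scope ring_scope.

Lemma adjmxZ p q (s : algC) (M : 'M[algC]_(p, q)) :
  adjmx (s *: M) = s^* *: adjmx M.
Proof. by apply/matrixP => a b; rewrite !mxE rmorphM. Qed.

Section FrameBound.

Variables (n k m : nat) (L : 'I_n -> 'M[algC]_(k, m)).
Hypothesis L_orth : forall i, orthonormal_cols (L i).

Lemma frame_bound_trace A :
  \sum_(i < n) (L i *m adjmx (L i)) = A%:M -> A * k%:R = n%:R * m%:R.
Proof.
move=> /(congr1 mxtrace); rewrite mxtrace_scalar raddf_sum /=.
under eq_bigr => i _ do rewrite mxtrace_mulC L_orth mxtrace1.
by rewrite sumr_const card_ord mulr_natr mulr_natl => <-.
Qed.

Lemma frame_bound_isoclinic A alpha (i0 : 'I_n) : (0 < m)%N ->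
  \sum_(i < n) (L i *m adjmx (L i)) = A%:M ->
  (forall i j, i != j -> adjmx (L i) *m L j *m adjmx (L j) *m L i = alpha%:M) ->
  A = 1 + alpha * (n%:R - 1).
Proof.
move=> m_gt0 frameA isoclinic.
have /matrixP/(_ (Ordinal m_gt0) (Ordinal m_gt0)) :
    adjmx (L i0) *m A%:M *m L i0 = (1 + alpha * n.-1%:R)%:M.
  rewrite -frameA mulmx_sumr mulmx_suml (bigD1 i0) //=.
  rewrite (eq_bigr (fun _ => alpha%:M)) => [|j ji0]; last first.
    by rewrite !mulmxA isoclinic // eq_sym.
  rewrite mulmxA -mulmxA !L_orth mul1mx sumr_const cardC1 card_ord.
  by rewrite mulr_natr raddfD raddfMn.
rewrite mul_mx_scalar -scalemxAl L_orth scalemx1 !mxE eqxx /= !mulr1n => ->.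
by rewrite -subn1 natrB // (leq_ltn_trans (leq0n i0) (ltn_ord i0)).
Qed.

End FrameBound.

Section IntegralFrame.

Variable S : subringClosed algC.
Hypothesis S_conj : {in S, forall x, x^* \in S}.

Lemma adjmx_mxOver p q (M : 'M[algC]_(p, q)) :
  M \is a mxOver S -> adjmx M \is a mxOver S.
Proof. by move=> /mxOverP M_S; apply/mxOverP => a b; rewrite !mxE S_conj. Qed.

Lemma mxOver_adjmx_product p q (X Y : 'M[algC]_(p, q)) :
  X \is a mxOver S -> Y \is a mxOver S ->
  adjmx X *m Y *m adjmx Y *m X \is a mxOver S.
Proof. by move=> X_S Y_S; rewrite !mxOverM ?adjmx_mxOver. Qed.

Variables (n k m : nat) (L : 'I_n -> 'M[algC]_(k, m)).
Hypothesis L_S : forall i, sqrtC k%:R *: L i \is a mxOver S.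

Lemma isoclinic_constant_scaled_in alpha (i j : 'I_n) : (0 < m)%N ->
  adjmx (L i) *m L j *m adjmx (L j) *m L i = alpha%:M ->
  k%:R ^+ 2 * alpha \in S.
Proof.
move=> m_gt0 isoclinic.
have sqrtk_real : (sqrtC k%:R)^* = sqrtC k%:R :> algC.
  by rewrite geC0_conj // sqrtC_ge0 ler0n.
have sqrtk_pow4 :
    sqrtC k%:R * (sqrtC k%:R * sqrtC k%:R * sqrtC k%:R) = k%:R ^+ 2 :> algC.
  by rewrite -[in RHS](sqrtCK k%:R); ring.
have := mxOver_adjmx_product (L_S i) (L_S j).
rewrite !adjmxZ sqrtk_real; do 3 rewrite -?scalemxAl -?scalemxAr.
rewrite !scalerA isoclinic scale_scalar_mx.
move=> /mxOverP/(_ (Ordinal m_gt0) (Ordinal m_gt0)).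
by rewrite mxE eqxx mulr1n sqrtk_pow4.
Qed.

End IntegralFrame.

Theorem mainTheorem4
  (Asub : {pred algC})
  (HAring : subring_closed Asub)
  (HAint : {subset Asub <= Aint})
  (HAconj : {in Asub, forall x, x^* \in Asub})
  (n m k : nat) (Hn : (1 < n)%N) (L : 'I_n -> 'M[algC]_(k, m))
  (Horth : forall i, orthonormal_cols (L i))
  (Htight : tight_fusion_frame L)
  (Heqi : equiisoclinic L)
  (Hent : forall (i : 'I_n) (r : 'I_k) (c : 'I_m), sqrtC k%:R * L i r c \in Asub) :
  exists z : int,
    k%:R * (m%:R * n%:R - k%:R) / (n%:R - 1) = z%:~R :> algC.
Proof.
have [-> | k_gt0] := posnP k; first by exists 0; rewrite !mul0r.
case: Htight => A A_gt0 frameA; case: Heqi => alpha _ isoclinic.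
have boundAk := frame_bound_trace Horth frameA.
have m_gt0 : (0 < m)%N.
  rewrite lt0n; apply/eqP => m0; move/eqP: boundAk.
  by rewrite m0 mulr0 mulf_eq0 pnatr_eq0 eqn0Ngt k_gt0 orbF gt_eqF.
pose i0 : 'I_n := Ordinal (ltnW Hn); pose j0 : 'I_n := Ordinal Hn.
have boundA := frame_bound_isoclinic Horth i0 m_gt0 frameA isoclinic.
have n1_neq0 : n%:R - 1 != 0 :> algC by rewrite subr_eq0 pnatr_eq1 gtn_eqF.
have frac_eq : k%:R * (m%:R * n%:R - k%:R) / (n%:R - 1) = k%:R ^+ 2 * alpha.
  by apply: (mulIf n1_neq0); rewrite mulfVK // [m%:R * _]mulrC -boundAk boundA; ring.
pose SA : subringClosed algC := HB.pack Asub (GRing.isSubringClosed.Build _ _ HAring).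
have L_SA i : sqrtC k%:R *: L i \is a mxOver SA by apply/mxOverP => r c; rewrite mxE Hent.
have alpha_SA : k%:R ^+ 2 * alpha \in SA.
  exact: (isoclinic_constant_scaled_in (S := SA) HAconj L_SA m_gt0
           (isoclinic i0 j0 isT)).
have frac_Aint : k%:R * (m%:R * n%:R - k%:R) / (n%:R - 1) \in Aint.
  by rewrite frac_eq HAint.
apply/intrP/Cint_rat_Aint => //.
by rewrite rpred_div ?rpredM ?rpredB ?rpred_nat ?rpred1 // rpredM ?rpred_nat.
Qed.
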